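(* Let $N\ge 2$ be an integer and index rows and columns of $N\times N$ matrices by $0,1,\dots,N-1$. Let $H$ be the complex symmetric tridiagonal $N\times N$ matrix with diagonal entries $H_{n,n}={\rm i}\,(2n-N+1)$ for $n=0,\dots,N-1$ and off-diagonal entries $H_{n-1,n}=H_{n,n-1}=\sqrt{n(N-n)}$ for $n=1,\dots,N-1$ (all other entries zero). Let $J$ be the $N\times N$ nilpotent Jordan block, $J_{n,n+1}=1$ for $n=0,\dots,N-2$ and all other entries zero. Define the diagonal matrices $D$, $G$ and the matrix $P$ by $$D_{n,n}={\rm i}^n\sqrt{\binom{N-1}{n}},\qquad G_{n,n}=(-{\rm i})^{N-n-1}\,(N-1-n)!,\qquad P_{m,q}=\binom{N-1-m}{q}\quad (n,m,q=0,\dots,N-1),$$ with the convention $\binom{a}{b}=0$ for $b>a$. Then $Q:=D\,P\,G$ is invertible and satisfies $H\,Q=Q\,J$, i.e. $Q^{-1}HQ=J$.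
   Context: $H$ is the Bose–Hubbard Hamiltonian $H^{(N)}_{(BH)}(z)$ evaluated at its exceptional point $z=1$; $Q$ is called the transition matrix (it brings $H$ to the Jordan block with eigenvalue $0$). *)

From HB Require Import structures.
From mathcomp Require Import all_boot all_order all_algebra.
Set Implicit Arguments. Unset Strict Implicit. Unset Printing Implicit Defensive.
Import Order.TTheory GRing.Theory Num.Theory.
Local Open Scope ring_scope.

Section BH.
Variables (C : numClosedFieldType) (N : nat).

Definition BH_H : 'M[C]_N := \matrix_(i < N, j < N)
  if i == j then 'i * ((2 * i + 1)%:R - N%:R)
  else if j == i.+1 :> nat then sqrtC ((j * (N - j))%N%:R)
  else if i == j.+1 :> nat then sqrtC ((i * (N - i))%N%:R)
  else 0.

Definition BH_J : 'M[C]_N := \matrix_(i < N, j < N) ((j == i.+1 :> nat)%:R).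

Definition BH_D : 'M[C]_N := \matrix_(i < N, j < N)
  if i == j then 'i ^+ i * sqrtC ('C(N.-1, i))%:R else 0.

Definition BH_G : 'M[C]_N := \matrix_(i < N, j < N)
  if i == j then (- 'i) ^+ (N - i - 1) * ((N - 1 - i)`!)%:R else 0.

(* nat binomial 'C(a,b) is 0 when b > a *)
Definition BH_P : 'M[C]_N := \matrix_(m < N, q < N) ('C(N - 1 - m, q))%:R.

Definition BH_Q : 'M[C]_N := BH_D *m BH_P *m BH_G.

End BH.

From HB Require Import structures.
From mathcomp Require Import all_boot all_order all_algebra.
From mathcomp Require Import perm zify ring.
Import Order.TTheory GRing.Theory Num.Theory.
Local Open Scope ring_scope.

(* Conjugating by the diagonal factors removes the square roots and the
   factorials: D^-1 H D = 'i T and G J G^-1 = - 'i S, where T is an integer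
   tridiagonal matrix and S an integer weighted shift.  Hence H Q = Q J reduces
   to T P = - P S, which entrywise is Pascal's rule combined with the absorption
   identities a C(a-1, q) = (a - q) C(a, q) and q C(a, q) = (a - q + 1) C(a, q-1).
   Q is invertible since D and G are diagonal with nonzero entries and P, read
   with its rows reversed, is the unitriangular Pascal matrix (C(i, j)). *)

Lemma sum_nat_delta {R : pzSemiRingType} {n j : nat} (F : nat -> R) :
  ((n <= j)%N -> F j = 0) -> \sum_(k < n) (k == j :> nat)%:R * F k = F j.
Proof.
move=> Fj0; have [lt_jn | le_nj] := ltnP j n.
  rewrite (bigD1 (Ordinal lt_jn)) //= eqxx mul1r big1 ?addr0 // => k.
  by rewrite -val_eqE /= => /negbTE ->; rewrite mul0r.
rewrite (Fj0 le_nj) big1 // => k _.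
by rewrite ltn_eqF ?mul0r // (leq_trans (ltn_ord k) le_nj).
Qed.

Lemma matrix_if_eq_diag (R : pzSemiRingType) n (d : 'I_n -> R) :
  \matrix_(i, j) (if i == j then d i else 0) = diag_mx (\row_i d i).
Proof. by apply/matrixP => i j; rewrite !mxE; case: eqP => [->|]. Qed.

Lemma unitmx_trig (F : fieldType) n (A : 'M[F]_n) :
  is_trig_mx A -> (forall i, A i i != 0) -> A \in unitmx.
Proof.
move=> trigA A_neq0; rewrite unitmxE det_trig // unitfE.
by apply/prodf_neq0 => i _.
Qed.

Lemma unitmx_diag (F : fieldType) n (d : 'rV[F]_n) :
  (forall i, d 0 i != 0) -> diag_mx d \in unitmx.
Proof.
move=> d_neq0; apply: unitmx_trig; first exact: diag_mx_is_trig.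
by move=> i; rewrite mxE eqxx mulr1n.
Qed.

Lemma pascal_unitmx (F : fieldType) n :
  (\matrix_(i < n, j < n) 'C(i, j)%:R : 'M[F]_n) \in unitmx.
Proof.
apply: unitmx_trig => [|i]; last by rewrite mxE binn oner_eq0.
by apply/is_trig_mxP => i j lt_ij; rewrite mxE bin_small.
Qed.

Section SqrtBinomial.
Variable C : numClosedFieldType.

Lemma sqrtC_natM (a b : nat) :
  sqrtC ((a * b)%N%:R : C) = sqrtC a%:R * sqrtC b%:R.
Proof. by rewrite natrM sqrtCM ?nnegrE. Qed.

Lemma sqrtC_sqr_natM (c x : nat) :
  sqrtC ((c * c * x)%N%:R : C) = c%:R * sqrtC x%:R.
Proof. by rewrite sqrtC_natM mulnn natrX sqrCK. Qed.

Lemma sqrtC_mul_bin_down n m :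
  sqrtC ((m.+1 * (n - m))%N%:R : C) * sqrtC 'C(n, m.+1)%:R
  = (n - m)%:R * sqrtC 'C(n, m)%:R.
Proof. by rewrite -sqrtC_natM mulnAC mul_bin_left mulnAC sqrtC_sqr_natM. Qed.

Lemma sqrtC_mul_bin_up n m :
  sqrtC ((m.+1 * (n - m))%N%:R : C) * sqrtC 'C(n, m)%:R
  = m.+1%:R * sqrtC 'C(n, m.+1)%:R.
Proof. by rewrite -sqrtC_natM -mulnA -mul_bin_left mulnA sqrtC_sqr_natM. Qed.

End SqrtBinomial.

Lemma mul_bin_pred_add a q : (a * 'C(a.-1, q) + q * 'C(a, q) = a * 'C(a, q))%N.
Proof.
rewrite mul_bin_down -mulnDl.
by case: (leqP q a) => [/subnK -> // | /bin_small ->]; rewrite !muln0.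
Qed.

Lemma mul_subn_bin m a p :
  ((m + a - p) * 'C(a, p) = m * 'C(a, p) + p.+1 * 'C(a, p.+1))%N.
Proof.
case: (leqP p a) => [le_pa | lt_ap]; last by rewrite !bin_small ?muln0 // ltnW.
by rewrite -addnBA // mulnDl mul_bin_left.
Qed.

(* Entry (m, q) of BH_T *m BH_P = - (BH_P *m BH_S), with a = N - 1 - m. *)
Lemma bin_tridiag (R : comPzRingType) m a q :
  ((2 * m + 1)%:R - (m + a + 1)%:R) * 'C(a, q)%:R + a%:R * 'C(a.-1, q)%:R
    - m%:R * 'C(a.+1, q)%:R
  = - (if q is p.+1 then 'C(a, p)%:R * (m + a - p)%:R else 0) :> R.
Proof.
case: q => [|p]; first by rewrite !bin0 !natrD; ring.
have absorb := congr1 (GRing.natmul (1 : R)) (mul_bin_pred_add a p.+1).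
have split := congr1 (GRing.natmul (1 : R)) (mul_subn_bin m a p).
rewrite /= !natrD !natrM in absorb split.
rewrite binS natrD [_ * (m + a - p)%:R]mulrC split (canRL (addrK _) absorb) !natrD.
ring.
Qed.

Section BoseHubbard.
Variables (C : numClosedFieldType) (N : nat).

Definition bh_d (n : nat) : C := 'i ^+ n * sqrtC 'C(N.-1, n)%:R.
Definition bh_g (n : nat) : C := (- 'i) ^+ (N - n - 1) * (N - 1 - n)`!%:R.

Lemma BH_DE : BH_D C N = diag_mx (\row_i bh_d i).
Proof. exact: matrix_if_eq_diag. Qed.

Lemma BH_GE : BH_G C N = diag_mx (\row_i bh_g i).
Proof. exact: matrix_if_eq_diag. Qed.

Definition BH_T : 'M[C]_N := \matrix_(i, j)
  ((j == i :> nat)%:R * ((2 * i + 1)%:R - N%:R)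
   + (j == i.+1 :> nat)%:R * (N - 1 - i)%:R - (j.+1 == i :> nat)%:R * i%:R).

Definition BH_S : 'M[C]_N := \matrix_(i, j) ((j == i.+1 :> nat)%:R * (N - 1 - i)%:R).

Lemma BH_HD : BH_H C N *m BH_D C N = BH_D C N *m ('i *: BH_T).
Proof.
rewrite BH_DE mul_mx_diag mul_diag_mx; apply/matrixP => m k.
rewrite !mxE -val_eqE /bh_d; case: m k => [m hm] [k hk] /=.
have [<- | _] := eqVneq m k.
  rewrite (ltn_eqF (ltnSn m)) (gtn_eqF (ltnSn m)) mul1r !mul0r addr0 subr0.
  by rewrite mulrC.
have [-> | _] := eqVneq k m.+1.
  rewrite (gtn_eqF (leqW (ltnSn m))) mulrCA subnS predn_sub.
  rewrite sqrtC_mul_bin_down subn1 exprS.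
  by rewrite !mul0r mul1r add0r subr0; ring.
have [-> | _] := eqVneq m k.+1.
  rewrite mulrCA subnS predn_sub sqrtC_mul_bin_up !mul0r mul1r !add0r.
  have -> : 'i ^+ k.+1 * sqrtC 'C(N.-1, k.+1)%:R * ('i * - k.+1%:R)
            = - ('i * 'i) * ('i ^+ k * (k.+1%:R * sqrtC 'C(N.-1, k.+1)%:R)) :> C.
    by rewrite exprS; ring.
  by rewrite mulCii opprK mul1r.
by rewrite !mul0r subr0 addr0 !mulr0.
Qed.

Lemma BH_GJ : BH_G C N *m BH_J C N = - 'i *: (BH_S *m BH_G C N).
Proof.
rewrite BH_GE mul_diag_mx mul_mx_diag; apply/matrixP => m k.
rewrite !mxE /bh_g; case: m k => [m hm] [k hk] /=.
case: eqP => [k_Sm | _]; last by rewrite !mul0r !mulr0.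
subst k; rewrite (_ : (N - m - 1 = (N - m.+1 - 1).+1)%N); last by lia.
rewrite (_ : (N - 1 - m = (N - 1 - m.+1).+1)%N); last by lia.
by rewrite exprS factS natrM; ring.
Qed.

Lemma BH_TP_entry (m q : 'I_N) :
  (BH_T *m BH_P C N) m q
  = ((2 * m + 1)%:R - N%:R) * 'C(N - 1 - m, q)%:R
    + (N - 1 - m)%:R * 'C((N - 1 - m).-1, q)%:R - m%:R * 'C((N - 1 - m).+1, q)%:R.
Proof.
rewrite mxE; under eq_bigr do rewrite !mxE mulrBl mulrDl -!mulrA.
rewrite sumrB big_split /=.
rewrite (sum_nat_delta (fun k => _ * 'C(N - 1 - k, q)%:R)); last by rewrite leqNgt ltn_ord.
rewrite (sum_nat_delta (fun k => _ * 'C(N - 1 - k, q)%:R)); last first.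
  by move=> le_N_Sm; rewrite (_ : N - 1 - m = 0)%N ?mul0r //; lia.
rewrite [(N - 1 - m.+1)%N]subnS; congr (_ - _).
case: m => [[|m] hm] /=; first by rewrite mulr0n mul0r big1 // => k _; rewrite mul0r.
under eq_bigr do rewrite eqSS.
rewrite (sum_nat_delta (fun k => _ * 'C(N - 1 - k, q)%:R)); last by lia.
by rewrite (_ : (N - 1 - m = (N - 1 - m.+1).+1)%N) //; lia.
Qed.

Lemma BH_PS_entry (m q : 'I_N) :
  (BH_P C N *m BH_S) m q
  = if q : nat is p.+1 then 'C(N - 1 - m, p)%:R * (N - 1 - p)%:R else 0.
Proof.
rewrite mxE; under eq_bigr do rewrite !mxE mulrCA.
case: q => [[|p] hp] /=; first by rewrite big1 // => k _; rewrite mul0r.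
under eq_bigr do rewrite eqSS eq_sym.
by rewrite (sum_nat_delta (fun k => 'C(N - 1 - m, k)%:R * (N - 1 - k)%:R)) //; lia.
Qed.

Lemma BH_TP : BH_T *m BH_P C N = - (BH_P C N *m BH_S).
Proof.
apply/matrixP => m q; rewrite BH_TP_entry mxE BH_PS_entry.
set a := (N - 1 - m)%N.
have eN : N = (m + a + 1)%N by rewrite /a; move: (ltn_ord m); lia.
rewrite [in N%:R]eN bin_tridiag.
by case: q => [[|p] hp] //=; rewrite [in RHS]eN addnK.
Qed.

Lemma BH_HQ : BH_H C N *m BH_Q C N = BH_Q C N *m BH_J C N.
Proof.
have TP : 'i *: BH_T *m BH_P C N = BH_P C N *m (- 'i *: BH_S).
  by rewrite -scalemxAl BH_TP -scalemxAr scaleNr scalerN.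
rewrite /BH_Q !mulmxA BH_HD -(mulmxA (BH_D C N)) TP mulmxA.
by rewrite -(mulmxA _ _ (BH_G C N)) -scalemxAl -BH_GJ !mulmxA.
Qed.

Lemma BH_D_unitmx : BH_D C N \in unitmx.
Proof.
rewrite BH_DE; apply: unitmx_diag => i; rewrite mxE /bh_d.
rewrite mulf_neq0 ?expf_neq0 ?neq0Ci // sqrtC_eq0 pnatr_eq0 -lt0n bin_gt0.
by move: (ltn_ord i); lia.
Qed.

Lemma BH_G_unitmx : BH_G C N \in unitmx.
Proof.
rewrite BH_GE; apply: unitmx_diag => i; rewrite mxE /bh_g.
by rewrite mulf_neq0 ?expf_neq0 ?oppr_eq0 ?neq0Ci // pnatr_eq0 -lt0n fact_gt0.
Qed.

Lemma row_perm_rev_BH_P :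
  row_perm (perm (@rev_ord_inj N)) (BH_P C N) = \matrix_(i, j) 'C(i, j)%:R.
Proof.
apply/matrixP => i j; rewrite !mxE permE /=.
by rewrite (_ : (N - 1 - (N - i.+1) = i)%N) //; move: (ltn_ord i); lia.
Qed.

Lemma BH_P_unitmx : BH_P C N \in unitmx.
Proof.
have := pascal_unitmx C N.
by rewrite -row_perm_rev_BH_P row_permE unitmx_mul => /andP[].
Qed.

Lemma BH_Q_unitmx : BH_Q C N \in unitmx.
Proof. by rewrite /BH_Q !unitmx_mul BH_D_unitmx BH_P_unitmx BH_G_unitmx. Qed.
End BoseHubbard.

Theorem mainTheorem1 (C : numClosedFieldType) (N : nat) (hN : (2 <= N)%N) :
  BH_Q C N \in unitmx /\
  BH_H C N *m BH_Q C N = BH_Q C N *m BH_J C N /\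
  invmx (BH_Q C N) *m BH_H C N *m BH_Q C N = BH_J C N.
Proof.
have Q_unit := BH_Q_unitmx C N.
split; first exact: Q_unit.
split; first exact: BH_HQ.
by rewrite -mulmxA BH_HQ mulmxA mulVmx // mul1mx.
Qed.
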